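(* Consider the nearly-elastic two-well model described in the context, started at a point $x=(q_0,p_0)$, and let $X^\varepsilon_t=(q^\varepsilon(t),p^\varepsilon(t))$ be its trajectory and $\widetilde X^\varepsilon_t=X^\varepsilon_{t/\varepsilon}$. Within each edge of the graph $\Gamma$, as $\varepsilon\downarrow0$, the energy $H(\widetilde X^\varepsilon_t)=\frac{(p^\varepsilon(t/\varepsilon))^2}{2}$ converges uniformly (on bounded time intervals during which the motion stays in that edge) to the deterministic motion $H(t)$ satisfying $$\frac{dH}{dt}=-2\frac{c_1(\sqrt{2H})+c_2(\sqrt{2H})}{T_3(H)}H,\ H(0)=H_0,\ \text{on } I_3;\qquad \frac{dH}{dt}=-2\frac{c_1(\sqrt{2H})+c_3(\sqrt{2H})}{T_1(H)}H\ \text{on } I_1;\qquad \frac{dH}{dt}=-2\frac{c_2(\sqrt{2H})+c_3(\sqrt{2H})}{T_2(H)}H\ \text{on } I_2,$$ where $H_0=p_0^2/2$, $T_3(H)=\frac{2(a_1+a_2)}{\sqrt{2H}}$, $T_1(H)=\frac{2a_1}{\sqrt{2H}}$, $T_2(H)=\frac{2a_2}{\sqrt{2H}}$ are the periods of the elastic motion with energy $H$ for the respective edges.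
   Context: Two-well nearly-elastic model. Fix $a_1,a_2>0$ and $H(O)>0$. Phase space $\sqcap=\{(q,p)\in\mathbb{R}^2:-a_1\le q\le a_2\}$, energy $H(q,p)=p^2/2$. A unit-mass particle moves freely; with energy $>H(O)$ it moves in $[-a_1,a_2]$ reflecting at $q=-a_1$ and $q=a_2$; with energy $\le H(O)$ it is confined to the well $\mathcal E_1=[-a_1,0]$ or $\mathcal E_2=[0,a_2]$ in which it is, reflecting at both ends. If it hits $q=-a_1$, $q=a_2$, or the interior wall $q=0$ with speed $v$, it is reflected with speed $v(1-\varepsilon c_1(v))$, $v(1-\varepsilon c_2(v))$, $v(1-\varepsilon c_3(v))$ respectively, where $c_1,c_2,c_3$ are positive smooth functions and $0<\varepsilon\ll1$. The graph $\Gamma$ (points of $\sqcap$ in the same connected component of a level set of $H$ identified) has interior vertex $O$ at energy $H(O)$ and edges $I_3$ (energy $>H(O)$), $I_1$ (energy $<H(O)$ in $\mathcal E_1$), $I_2$ (energy $<H(O)$ in $\mathcal E_2$). *)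

From Stdlib Require Import Reals Lra ClassicalEpsilon.
From Coquelicot Require Import Coquelicot.
Open Scope R_scope.

Definition energy (z : R * R) : R := (snd z) ^ 2 / 2.

Definition smooth_pos (c : R -> R) : Prop :=
  (forall v, 0 < v -> 0 < c v) /\ (forall (n : nat) v, 0 < v -> ex_derive_n c n v).

(** State (t,q,p): time t of the last event, position q and momentum p just
    after it.  The current mode is decided by the (constant between events)
    energy: energy > hO -> whole interval [-a1,a2]; energy <= hO -> the well
    containing the particle (at q = 0 it is in well 1 iff p < 0, i.e. it
    is moving into well 1).  The particle flies freely to the next wall it
    meets and is reflected there, its speed v being multiplied by
    (1 - eps c_i(v)), c_1 at -a1, c_2 at a2, c_3 at the interior wall 0.
    If p = 0 the particle is at rest forever (we just advance time by 1). *)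
Definition step (a1 a2 hO : R) (c1 c2 c3 : R -> R) (eps : R)
  (s : R * R * R) : R * R * R :=
  let '(t, q, p) := s in
  if Req_EM_T p 0 then (t + 1, q, p) else
  let big : bool := if Rle_dec (p ^ 2 / 2) hO then false else true in
  let well1 : bool :=
    if Rlt_dec q 0 then true
    else if Req_EM_T q 0 then (if Rlt_dec p 0 then true else false)
    else false in
  let L : R := if big then - a1 else if well1 then - a1 else 0 in
  let cL : R -> R := if big then c1 else if well1 then c1 else c3 in
  let Rw : R := if big then a2 else if well1 then 0 else a2 in
  let cR : R -> R := if big then c2 else if well1 then c3 else c2 in
  if Rlt_dec 0 p
  then (t + (Rw - q) / p, Rw, - p * (1 - eps * cR p))
  else (t + (L - q) / p, L, - p * (1 - eps * cL (- p))).

Fixpoint event (a1 a2 hO : R) (c1 c2 c3 : R -> R) (eps : R) (x : R * R)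
  (n : nat) : R * R * R :=
  match n with
  | O => (0, fst x, snd x)
  | S n => step a1 a2 hO c1 c2 c3 eps (event a1 a2 hO c1 c2 c3 eps x n)
  end.

Definition ev_time (s : R * R * R) : R := fst (fst s).

(** The trajectory X^eps_t = (q^eps(t), p^eps(t)) started at x: free motion
    between consecutive events.  (Junk value (0,0) at times not covered by
    an event interval, e.g. t < 0.) *)
Definition traj (a1 a2 hO : R) (c1 c2 c3 : R -> R) (eps : R) (x : R * R)
  (t : R) : R * R :=
  let ev := event a1 a2 hO c1 c2 c3 eps x in
  match excluded_middle_informative
          (exists k : nat, ev_time (ev k) <= t < ev_time (ev (S k))) with
  | left Hex =>
      let k := proj1_sig (constructive_indefinite_description _ Hex) in
      let '(tk, qk, pk) := ev k in (qk + pk * (t - tk), pk)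
  | right _ => (0, 0)
  end.

Inductive edge := I1 | I2 | I3.

Definition T1 (a1 h : R) : R := 2 * a1 / sqrt (2 * h).
Definition T2 (a2 h : R) : R := 2 * a2 / sqrt (2 * h).
Definition T3 (a1 a2 h : R) : R := 2 * (a1 + a2) / sqrt (2 * h).

Definition limit_rhs (a1 a2 : R) (c1 c2 c3 : R -> R) (e : edge) (h : R) : R :=
  match e with
  | I3 => - 2 * (c1 (sqrt (2 * h)) + c2 (sqrt (2 * h))) / T3 a1 a2 h * h
  | I1 => - 2 * (c1 (sqrt (2 * h)) + c3 (sqrt (2 * h))) / T1 a1 h * h
  | I2 => - 2 * (c2 (sqrt (2 * h)) + c3 (sqrt (2 * h))) / T2 a2 h * h
  end.

Definition in_edge (hO : R) (e : edge) (h : R) : Prop :=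
  match e with
  | I3 => hO < h
  | I1 | I2 => 0 < h < hO
  end.

Definition starts_in_edge (hO q0 p0 : R) (e : edge) : Prop :=
  in_edge hO e (p0 ^ 2 / 2) /\
  match e with
  | I3 => True
  | I1 => q0 < 0 \/ (q0 = 0 /\ p0 < 0)
  | I2 => 0 < q0 \/ (q0 = 0 /\ 0 < p0)
  end.

(* Inside its edge the particle bounces between two walls, its speed being multiplied
   by [1 - eps c(v)] at each of them.  Between two returns to the same wall, the speed map
   [v |-> damp a (damp b v)] together with the elapsed slow time [eps Ln (1/v + 1/v')] is an
   Euler step, with local error O(eps^2), for the averaged equation
   [v' = - (a v + b v) v^2 / (2 Ln)], which is the limiting ODE written for the speed
   [sqrt (2 H)].  The drift is Lipschitz on a compact window of speeds kept away from the
   separatrix, so a discrete Gronwall argument keeps the return speeds within O(eps) of the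
   solution for the O(1/eps) round trips up to slow time T; between two returns the energy
   moves by O(eps) only. *)

From Pilot Require Import Defs.
From Stdlib Require Import Reals Lra Lia Bool ClassicalEpsilon.
From Coquelicot Require Import Coquelicot.
Open Scope R_scope.

Definition wall (a1 a2 : R) (e : edge) (right : bool) : R :=
  match e, right with
  | I1, true | I2, false => 0
  | _, true => a2
  | _, false => - a1
  end.

Definition wall_coef (c1 c2 c3 : R -> R) (e : edge) (right : bool) : R -> R :=
  match e, right with
  | I1, true | I2, false => c3
  | _, true => c2
  | _, false => c1
  end.

Definition edge_length (a1 a2 : R) (e : edge) : R :=
  wall a1 a2 e true - wall a1 a2 e false.

(* Speeds at which [step] reflects at the walls of edge [e] (for a well, given [in_well]). *)
Definition in_regime (hO : R) (e : edge) (v : R) : Prop :=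
  match e with
  | I3 => hO < v ^ 2 / 2
  | I1 | I2 => v ^ 2 / 2 <= hO
  end.

Definition in_well (e : edge) (q p : R) : Prop :=
  match e with
  | I3 => True
  | I1 => q < 0 \/ (q = 0 /\ p < 0)
  | I2 => 0 < q \/ (q = 0 /\ 0 < p)
  end.

Definition toward (right : bool) (v : R) : R := if right then v else - v.

Definition damp (c : R -> R) (eps v : R) : R := v * (1 - eps * c v).

Lemma toward_sq right v : toward right v ^ 2 = v ^ 2.
Proof. destruct right; simpl; ring. Qed.

Section Collisions.

Variables (a1 a2 hO : R) (c1 c2 c3 : R -> R) (eps : R).
Hypotheses (Ha1 : 0 < a1) (Ha2 : 0 < a2).

Local Notation step := (step a1 a2 hO c1 c2 c3 eps).
Local Notation event := (event a1 a2 hO c1 c2 c3 eps).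

Lemma step_toward_wall e right t q v :
  0 < v -> in_regime hO e v -> in_well e q (toward right v) ->
  step (t, q, toward right v) =
  (t + (wall a1 a2 e right - q) / toward right v, wall a1 a2 e right,
   toward (negb right) (damp (wall_coef c1 c2 c3 e right) eps v)).
Proof.
  intros hv hreg hwell. unfold step.
  rewrite toward_sq.
  destruct (Req_EM_T (toward right v) 0) as [h0|_].
  { destruct right; simpl in h0; lra. }
  destruct right, e; cbn [toward negb in_regime in_well wall wall_coef] in *; unfold damp;
    repeat match goal with
    | |- context [Rle_dec ?x ?y] => destruct (Rle_dec x y)
    | |- context [Rlt_dec ?x ?y] => destruct (Rlt_dec x y)
    | |- context [Req_EM_T ?x ?y] => destruct (Req_EM_T x y)
    end; try (exfalso; lra); rewrite ?Ropp_involutive; f_equal; ring.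
Qed.

Lemma in_well_wall e right v :
  0 < v -> in_well e (wall a1 a2 e right) (toward (negb right) v).
Proof. intros hv; destruct right, e; cbn; lra. Qed.

Lemma step_across_edge e right t v :
  0 < v -> in_regime hO e v ->
  step (t, wall a1 a2 e right, toward (negb right) v) =
  (t + edge_length a1 a2 e / v, wall a1 a2 e (negb right),
   toward right (damp (wall_coef c1 c2 c3 e (negb right)) eps v)).
Proof.
  intros hv hreg.
  rewrite (step_toward_wall e), negb_involutive by (auto using in_well_wall).
  f_equal; f_equal. unfold edge_length; destruct right, e; cbn; field; lra.
Qed.

Lemma step_round_trip e right t v :
  let a := wall_coef c1 c2 c3 e right in
  let b := wall_coef c1 c2 c3 e (negb right) in
  let Ln := edge_length a1 a2 e in
  0 < v -> in_regime hO e v -> 0 < damp b eps v -> in_regime hO e (damp b eps v) ->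
  step (t, wall a1 a2 e right, toward (negb right) v) =
    (t + Ln / v, wall a1 a2 e (negb right), toward right (damp b eps v)) /\
  step (step (t, wall a1 a2 e right, toward (negb right) v)) =
    (t + Ln / v + Ln / damp b eps v, wall a1 a2 e right,
     toward (negb right) (damp a eps (damp b eps v))).
Proof.
  intros a b Ln hv hreg hv' hreg'.
  rewrite step_across_edge by assumption. split; [reflexivity|].
  rewrite <- (negb_involutive right) at 2.
  rewrite step_across_edge, !negb_involutive by assumption. reflexivity.
Qed.

Lemma step_time_position t q p :
  -a1 <= q <= a2 ->
  t <= ev_time (step (t, q, p)) /\ -a1 <= snd (fst (step (t, q, p))) <= a2.
Proof.
  intros hq. unfold step, ev_time.
  repeat match goal with
  | |- context [Rle_dec ?x ?y] => destruct (Rle_dec x y)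
  | |- context [Rlt_dec ?x ?y] => destruct (Rlt_dec x y)
  | |- context [Req_EM_T ?x ?y] => destruct (Req_EM_T x y)
  end; cbn; split; try lra.
  all: match goal with |- _ <= _ + ?x / ?y =>
    first [ assert (0 <= x / y) by (apply Rdiv_le_0_compat; lra)
          | replace (x / y) with ((- x) / (- y)) by (field; lra);
            assert (0 <= - x / - y) by (apply Rdiv_le_0_compat; lra) ] end; lra.
Qed.

Section Events.

Variable x : R * R.
Hypothesis Hx : -a1 <= fst x <= a2.

Lemma event_position n : -a1 <= snd (fst (event x n)) <= a2.
Proof.
  induction n as [|n IH]; [exact Hx|]. cbn [Defs.event].
  destruct (event x n) as [[t q] p]. apply step_time_position, IH.
Qed.

Lemma event_time_succ n : ev_time (event x n) <= ev_time (event x (S n)).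
Proof.
  pose proof (event_position n) as hq. cbn [Defs.event].
  destruct (event x n) as [[t q] p]. apply step_time_position, hq.
Qed.

Lemma event_time_le m n : (m <= n)%nat -> ev_time (event x m) <= ev_time (event x n).
Proof.
  induction 1 as [|n _ IH]; [lra|]. pose proof (event_time_succ n). lra.
Qed.

Lemma event_interval_unique s k k' :
  ev_time (event x k) <= s < ev_time (event x (S k)) ->
  ev_time (event x k') <= s < ev_time (event x (S k')) -> k = k'.
Proof.
  intros hk hk'.
  destruct (Nat.lt_total k k') as [lt|[eq|lt]]; [|exact eq|];
    [pose proof (event_time_le (S k) k' lt) | pose proof (event_time_le (S k') k lt)];
    lra.
Qed.

Lemma traj_energy_between_events s k :
  ev_time (event x k) <= s < ev_time (event x (S k)) ->
  energy (traj a1 a2 hO c1 c2 c3 eps x s) = snd (event x k) ^ 2 / 2.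
Proof.
  intros hk. unfold traj.
  destruct (excluded_middle_informative _) as [hex|hnone]; [|exfalso; eauto].
  destruct (constructive_indefinite_description _ hex) as [k' hk']; cbn.
  rewrite <- (event_interval_unique s k k' hk hk').
  destruct (event x k) as [[tk qk] pk]. reflexivity.
Qed.

End Events.

End Collisions.

Definition lipschitz_on (f : R -> R) (lo hi L : R) : Prop :=
  forall x y, lo <= x <= hi -> lo <= y <= hi -> Rabs (f x - f y) <= L * Rabs (x - y).

Definition pos_bounded_on (f : R -> R) (lo hi C : R) : Prop :=
  forall x, lo <= x <= hi -> 0 < f x <= C.

Lemma lipschitz_on_le f lo hi L L' :
  L <= L' -> lipschitz_on f lo hi L -> lipschitz_on f lo hi L'.
Proof.
  intros hLL' hf x y hx hy. eapply Rle_trans; [apply hf; assumption|].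
  apply Rmult_le_compat_r; [apply Rabs_pos | exact hLL'].
Qed.

Lemma pos_bounded_on_le f lo hi C C' :
  C <= C' -> pos_bounded_on f lo hi C -> pos_bounded_on f lo hi C'.
Proof. intros hCC' hf x hx. specialize (hf x hx). lra. Qed.

Lemma damp_le c eps w : 0 <= eps -> 0 <= c w -> 0 <= w -> damp c eps w <= w.
Proof.
  intros heps hc hw. unfold damp.
  assert (0 <= eps * c w * w) by (apply Rmult_le_pos; [apply Rmult_le_pos|]; lra). lra.
Qed.

Lemma damp_range c lo hi C eps v :
  pos_bounded_on c lo hi C -> 0 <= lo -> 0 <= eps -> lo <= v <= hi -> lo + eps * C * hi <= v ->
  (lo <= damp c eps v <= v) /\ v - damp c eps v <= eps * C * hi.
Proof.
  intros hc hlo heps hv hv'. pose proof (hc v hv) as hcv.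
  assert (hloss : v - damp c eps v = eps * c v * v) by (unfold damp; ring).
  assert (0 <= eps * c v * v) by (apply Rmult_le_pos; [apply Rmult_le_pos|]; lra).
  assert (eps * c v * v <= eps * C * hi)
    by (apply Rmult_le_compat; [apply Rmult_le_pos | | apply Rmult_le_compat_l |]; lra).
  lra.
Qed.

Lemma derive_bound_lipschitz f df lo hi M :
  (forall t, lo <= t <= hi -> is_derive f t (df t)) ->
  (forall t, lo <= t <= hi -> Rabs (df t) <= M) ->
  lipschitz_on f lo hi M.
Proof.
  intros hd hM x y hx hy.
  assert (lo <= Rmin y x) by (apply Rmin_glb; lra).
  assert (Rmax y x <= hi) by (apply Rmax_lub; lra).
  destruct (MVT_gen f y x df) as [z [hz ->]].
  - intros w hw. apply hd. lra.
  - intros w hw. apply continuity_pt_filterlim, (ex_derive_continuous f w).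
    exists (df w). apply hd. lra.
  - rewrite Rabs_mult. apply Rmult_le_compat_r; [apply Rabs_pos|]. apply hM. lra.
Qed.

Lemma smooth_pos_lipschitz_on c lo hi :
  smooth_pos c -> 0 < lo -> lo <= hi ->
  exists L C, 0 <= L /\ lipschitz_on c lo hi L /\ pos_bounded_on c lo hi C.
Proof.
  intros [hpos hder] hlo hlohi.
  assert (hc : forall v, lo <= v <= hi -> is_derive c v (Derive c v)).
  { intros v hv. apply Derive_correct, (hder 1%nat). lra. }
  assert (hc_cont : forall v, lo <= v <= hi -> continuity_pt c v).
  { intros v hv. apply continuity_pt_filterlim.
    exact (ex_derive_continuous c v (hder 1%nat v ltac:(lra))). }
  assert (hdc_cont : forall v, lo <= v <= hi -> continuity_pt (fun z => Rabs (Derive c z)) v).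
  { intros v hv. apply (continuity_pt_comp (Derive c) Rabs), Rcontinuity_abs.
    apply continuity_pt_filterlim.
    exact (ex_derive_continuous (Derive c) v (hder 2%nat v ltac:(lra))). }
  destruct (continuity_ab_maj _ lo hi hlohi hdc_cont) as [vL [hvL _]].
  destruct (continuity_ab_maj c lo hi hlohi hc_cont) as [vC [hvC _]].
  exists (Rabs (Derive c vL)), (c vC).
  split; [apply Rabs_pos|]. split.
  - exact (derive_bound_lipschitz c (Derive c) lo hi _ hc hvL).
  - intros x hx. split; [apply hpos; lra | apply hvC, hx].
Qed.

(* A round trip lasts about [2 eps Ln / v] in slow time and costs about [eps (a v + b v) v]
   of speed; for [H = v ^ 2 / 2] this is the ODE [limit_rhs] of the theorem. *)
Definition drift (a b : R -> R) (Ln v : R) : R := - (a v + b v) * v ^ 2 / (2 * Ln).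

Lemma round_trip_expansion a b Ln eps v :
  0 < Ln -> v <> 0 -> 1 - eps * b v <> 0 ->
  damp a eps (damp b eps v) - v - drift a b Ln v * (eps * Ln * (1 / v + 1 / damp b eps v))
  = eps * v * (a v - a (damp b eps v))
    + eps ^ 2 * (b v * a (damp b eps v) * v + (a v + b v) * v * b v / (2 * (1 - eps * b v))).
Proof. intros hLn hv hb. unfold damp, drift. field. repeat split; lra. Qed.

Section Drift.

Variables (a b : R -> R) (Ln lo hi L C : R).
Hypotheses (HLn : 0 < Ln) (Hlo : 0 < lo) (HL : 0 <= L).
Hypotheses (Ha_lip : lipschitz_on a lo hi L) (Hb_lip : lipschitz_on b lo hi L).
Hypotheses (Ha_bd : pos_bounded_on a lo hi C) (Hb_bd : pos_bounded_on b lo hi C).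

Lemma drift_lipschitz : lipschitz_on (drift a b Ln) lo hi ((L * hi ^ 2 + 2 * C * hi) / Ln).
Proof.
  intros x y hx hy. set (d := Rabs (x - y)).
  pose proof (Ha_bd y hy). pose proof (Hb_bd y hy).
  assert (hcoef : Rabs ((a x - a y + (b x - b y)) * x ^ 2) <= 2 * L * d * hi ^ 2).
  { rewrite Rabs_mult, (Rabs_right (x ^ 2)) by (apply Rle_ge, pow2_ge_0).
    apply Rmult_le_compat; [apply Rabs_pos | apply pow2_ge_0 | | apply pow_incr; lra].
    eapply Rle_trans; [apply Rabs_triang|].
    pose proof (Ha_lip x y hx hy) as ha; pose proof (Hb_lip x y hx hy) as hb.
    fold d in ha, hb. lra. }
  assert (hsq : Rabs ((a y + b y) * (x ^ 2 - y ^ 2)) <= 2 * C * (2 * hi * d)).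
  { replace (x ^ 2 - y ^ 2) with ((x - y) * (x + y)) by ring.
    rewrite !Rabs_mult, (Rabs_right (a y + b y)), (Rabs_right (x + y)) by lra. fold d.
    apply Rmult_le_compat; try lra; [apply Rmult_le_pos; [apply Rabs_pos | lra]|].
    rewrite (Rmult_comm d). apply Rmult_le_compat_r; [apply Rabs_pos | lra]. }
  replace (drift a b Ln x - drift a b Ln y)
    with (- ((a x - a y + (b x - b y)) * x ^ 2 + (a y + b y) * (x ^ 2 - y ^ 2)) / (2 * Ln))
    by (unfold drift; field; lra).
  unfold Rdiv. rewrite Rabs_mult, Rabs_Ropp, (Rabs_right (/ (2 * Ln)))
    by (apply Rle_ge, Rlt_le, Rinv_0_lt_compat; lra).
  apply (Rle_trans _ ((2 * L * d * hi ^ 2 + 2 * C * (2 * hi * d)) * / (2 * Ln))).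
  - apply Rmult_le_compat_r; [apply Rlt_le, Rinv_0_lt_compat; lra|].
    eapply Rle_trans; [apply Rabs_triang | lra].
  - right. field. lra.
Qed.

Lemma drift_bounded x : lo <= x <= hi -> Rabs (drift a b Ln x) <= C * hi ^ 2 / Ln.
Proof.
  intros hx. pose proof (Ha_bd x hx). pose proof (Hb_bd x hx).
  unfold drift. replace (- (a x + b x) * x ^ 2 / (2 * Ln))
    with (- ((a x + b x) * x ^ 2 / (2 * Ln))) by (field; lra).
  assert (hx2 : 0 <= x ^ 2 <= hi ^ 2) by (split; [apply pow2_ge_0 | apply pow_incr; lra]).
  rewrite Rabs_Ropp, Rabs_right.
  - unfold Rdiv. rewrite Rinv_mult, <- !Rmult_assoc.
    apply Rmult_le_compat_r; [apply Rlt_le, Rinv_0_lt_compat; lra|].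
    assert (hsum : (a x + b x) * / 2 <= C) by lra.
    replace ((a x + b x) * x ^ 2 * / 2) with ((a x + b x) * / 2 * x ^ 2) by ring.
    apply Rmult_le_compat; lra.
  - apply Rle_ge, Rdiv_le_0_compat; [apply Rmult_le_pos|]; lra.
Qed.

Let round_trip_remainder_bound eps v :
  0 <= eps -> eps * C <= 1 / 2 -> lo <= v <= hi -> lo <= damp b eps v ->
  0 <= b v * a (damp b eps v) * v + (a v + b v) * v * b v / (2 * (1 - eps * b v))
    <= 3 * C ^ 2 * hi.
Proof.
  intros heps heC hv hv'.
  pose proof (Hb_bd v hv) as hb. pose proof (Ha_bd v hv) as ha.
  assert (hv'v : damp b eps v <= v) by (apply damp_le; lra).
  pose proof (Ha_bd (damp b eps v) ltac:(lra)) as ha'.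
  assert (hebC : eps * b v <= 1 / 2).
  { assert (eps * b v <= eps * C) by (apply Rmult_le_compat_l; lra). lra. }
  assert (h1 : 0 <= b v * a (damp b eps v) * v <= C ^ 2 * hi).
  { split; [apply Rmult_le_pos; [apply Rmult_le_pos|]; lra|].
    replace (C ^ 2 * hi) with (C * C * hi) by ring.
    apply Rmult_le_compat; [apply Rmult_le_pos | | apply Rmult_le_compat |]; lra. }
  assert (hnum : 0 <= (a v + b v) * v * b v <= 2 * C * hi * C).
  { split; [apply Rmult_le_pos; [apply Rmult_le_pos|]; lra|].
    apply Rmult_le_compat; [apply Rmult_le_pos | | apply Rmult_le_compat |]; lra. }
  assert (h2 : (a v + b v) * v * b v / (2 * (1 - eps * b v)) <= (a v + b v) * v * b v).
  { unfold Rdiv. rewrite <- (Rmult_1_r ((a v + b v) * v * b v)) at 2.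
    apply Rmult_le_compat_l; [lra|]. rewrite <- Rinv_1. apply Rinv_le_contravar; lra. }
  assert (0 <= (a v + b v) * v * b v / (2 * (1 - eps * b v))) by (apply Rdiv_le_0_compat; lra).
  replace (3 * C ^ 2 * hi) with (C ^ 2 * hi + 2 * C * hi * C) by ring.
  lra.
Qed.

Lemma round_trip_euler_error eps v :
  0 < eps -> eps * C <= 1 / 2 -> lo <= v <= hi -> lo <= damp b eps v ->
  Rabs (damp a eps (damp b eps v) - v
        - drift a b Ln v * (eps * Ln * (1 / v + 1 / damp b eps v)))
  <= eps ^ 2 * (L * C * hi ^ 2 + 3 * C ^ 2 * hi).
Proof.
  intros heps heC hv hv'.
  pose proof (Hb_bd v hv) as hb.
  assert (hloss : 0 <= v - damp b eps v <= eps * C * hi).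
  { replace (v - damp b eps v) with (eps * b v * v) by (unfold damp; ring).
    split; [apply Rmult_le_pos; [apply Rmult_le_pos|]; lra|].
    apply Rmult_le_compat; [apply Rmult_le_pos | | apply Rmult_le_compat_l |]; lra. }
  pose proof (round_trip_remainder_bound eps v ltac:(lra) heC hv hv') as hrem.
  assert (eps * b v <= eps * C) by (apply Rmult_le_compat_l; lra).
  rewrite round_trip_expansion by lra.
  assert (hlip : Rabs (eps * v * (a v - a (damp b eps v))) <= eps ^ 2 * (L * C * hi ^ 2)).
  { rewrite Rabs_mult, (Rabs_right (eps * v)) by (apply Rle_ge, Rmult_le_pos; lra).
    apply (Rle_trans _ (eps * hi * (L * (eps * C * hi)))); [|right; ring].
    apply Rmult_le_compat; [apply Rmult_le_pos; lra | apply Rabs_pos | |].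
    - apply Rmult_le_compat_l; lra.
    - eapply Rle_trans; [apply Ha_lip; lra|]. apply Rmult_le_compat_l; [exact HL|].
      rewrite Rabs_right; lra. }
  eapply Rle_trans; [apply Rabs_triang|].
  rewrite (Rabs_right (eps ^ 2 * _)) by (apply Rle_ge, Rmult_le_pos; [apply pow2_ge_0 | lra]).
  assert (eps ^ 2 * (b v * a (damp b eps v) * v
            + (a v + b v) * v * b v / (2 * (1 - eps * b v))) <= eps ^ 2 * (3 * C ^ 2 * hi))
    by (apply Rmult_le_compat_l; [apply pow2_ge_0 | lra]).
  lra.
Qed.

End Drift.

Lemma round_trip_duration_bounds eps Ln lo hi v v' :
  0 < eps -> 0 < Ln -> 0 < lo -> lo <= v <= hi -> lo <= v' ->
  eps * Ln / hi <= eps * Ln * (1 / v + 1 / v') <= 2 * (eps * Ln / lo).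
Proof.
  intros heps hLn hlo hv hv'.
  assert (0 < eps * Ln) by (apply Rmult_lt_0_compat; lra).
  assert (1 / hi <= 1 / v) by (apply Rmult_le_compat_l, Rinv_le_contravar; lra).
  assert (1 / v <= 1 / lo) by (apply Rmult_le_compat_l, Rinv_le_contravar; lra).
  assert (1 / v' <= 1 / lo) by (apply Rmult_le_compat_l, Rinv_le_contravar; lra).
  assert (0 < 1 / v') by (apply Rdiv_lt_0_compat; lra).
  replace (eps * Ln / hi) with (eps * Ln * (1 / hi)) by (field; lra).
  replace (2 * (eps * Ln / lo)) with (eps * Ln * (1 / lo + 1 / lo)) by (field; lra).
  split; apply Rmult_le_compat_l; lra.
Qed.

Lemma exp_le_mono x y : x <= y -> exp x <= exp y.
Proof.
  intros hxy. destruct (Rle_lt_or_eq_dec x y hxy) as [hlt | ->];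
    [apply Rlt_le, exp_increasing, hlt | apply Rle_refl].
Qed.

Lemma gronwall_step e0 c K x D err err' :
  0 <= K -> 0 <= x -> 0 <= D -> 0 <= e0 -> 0 <= c ->
  err <= (e0 + c * x) * exp (K * x) ->
  err' <= err * (1 + K * D) + c * D ->
  err' <= (e0 + c * (x + D)) * exp (K * (x + D)).
Proof.
  intros hK hx hD he0 hc herr herr'.
  assert (hexp : exp (K * (x + D)) = exp (K * x) * exp (K * D))
    by (rewrite <- exp_plus; f_equal; ring).
  assert (hlin : 1 + K * D <= exp (K * D)) by apply exp_ineq1_le.
  assert (hone : 1 <= exp (K * (x + D))).
  { pose proof (exp_ineq1_le (K * (x + D))).
    assert (0 <= K * (x + D)) by (apply Rmult_le_pos; lra). lra. }
  assert (hKD : 0 <= K * D) by (apply Rmult_le_pos; lra).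
  assert (hcx : 0 <= c * x) by (apply Rmult_le_pos; lra).
  assert (hprop : err * (1 + K * D) <= (e0 + c * x) * exp (K * (x + D))).
  { rewrite hexp, <- Rmult_assoc.
    apply (Rle_trans _ ((e0 + c * x) * exp (K * x) * (1 + K * D))).
    - apply Rmult_le_compat_r; lra.
    - apply Rmult_le_compat_l; [apply Rmult_le_pos; [lra | apply Rlt_le, exp_pos] | exact hlin]. }
  assert (hsrc : c * D <= c * D * exp (K * (x + D))).
  { rewrite <- (Rmult_1_r (c * D)) at 1. apply Rmult_le_compat_l; [apply Rmult_le_pos|]; lra. }
  replace ((e0 + c * (x + D)) * exp (K * (x + D)))
    with ((e0 + c * x) * exp (K * (x + D)) + c * D * exp (K * (x + D))) by ring.
  lra.
Qed.

Lemma gronwall_bound_le e0 c K x T :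
  0 <= e0 -> 0 <= c -> 0 <= K -> 0 <= x <= T ->
  (e0 + c * x) * exp (K * x) <= (e0 + c * T) * exp (K * T).
Proof.
  intros he0 hc hK hx. apply Rmult_le_compat.
  - assert (0 <= c * x) by (apply Rmult_le_pos; lra). lra.
  - apply Rlt_le, exp_pos.
  - apply Rplus_le_compat_l, Rmult_le_compat_l; lra.
  - apply exp_le_mono, Rmult_le_compat_l; lra.
Qed.

Lemma euler_step_error u G T K M s D :
  (forall t, 0 <= t <= T -> is_derive u t (G (u t))) ->
  (forall t, 0 <= t <= T -> Rabs (G (u t)) <= M) ->
  (forall t1 t2, 0 <= t1 <= T -> 0 <= t2 <= T ->
     Rabs (G (u t1) - G (u t2)) <= K * Rabs (u t1 - u t2)) ->
  0 <= K -> 0 <= s -> 0 <= D -> s + D <= T ->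
  Rabs (u (s + D) - u s - G (u s) * D) <= K * M * D ^ 2.
Proof.
  intros hu hM hK hK0 hs hD hT.
  assert (hulip : lipschitz_on u 0 T M) by exact (derive_bound_lipschitz u _ 0 T M hu hM).
  destruct (MVT_gen u s (s + D) (fun t => G (u t))) as [z [hz ->]].
  - intros w hw. apply hu. rewrite Rmin_left, Rmax_right in hw by lra. lra.
  - intros w hw. rewrite Rmin_left, Rmax_right in hw by lra.
    apply continuity_pt_filterlim, (ex_derive_continuous u w).
    exists (G (u w)). apply hu. lra.
  - rewrite Rmin_left, Rmax_right in hz by lra.
    replace (G (u z) * (s + D - s) - G (u s) * D) with ((G (u z) - G (u s)) * D) by ring.
    rewrite Rabs_mult, (Rabs_right D) by lra.
    assert (hM0 : 0 <= M) by (pose proof (hM s ltac:(lra)); pose proof (Rabs_pos (G (u s))); lra).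
    assert (hGz : Rabs (G (u z) - G (u s)) <= K * (M * D)).
    { eapply Rle_trans; [apply hK; lra|]. apply Rmult_le_compat_l; [exact hK0|].
      eapply Rle_trans; [apply hulip; lra|].
      rewrite Rabs_right by lra. apply Rmult_le_compat_l; lra. }
    replace (K * M * D ^ 2) with (K * (M * D) * D) by ring.
    apply Rmult_le_compat_r; lra.
Qed.

Lemma half_sq_lipschitz x y m :
  0 <= x <= m -> 0 <= y <= m -> Rabs (x ^ 2 / 2 - y ^ 2 / 2) <= m * Rabs (x - y).
Proof.
  intros hx hy. replace (x ^ 2 / 2 - y ^ 2 / 2) with ((x - y) * ((x + y) / 2)) by field.
  rewrite Rabs_mult, (Rabs_right ((x + y) / 2)), Rmult_comm by lra.
  apply Rmult_le_compat_r; [apply Rabs_pos | lra].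
Qed.

Lemma mul_lt_of_lt_div_succ eps X w :
  0 < eps -> 0 <= X -> eps < w / (X + 1) -> eps * X < w.
Proof.
  intros heps hX h. apply (Rmult_lt_compat_r (X + 1)) in h; [|lra].
  replace (w / (X + 1) * (X + 1)) with w in h by (field; lra).
  assert (eps * X <= eps * (X + 1)) by (apply Rmult_le_compat_l; lra). lra.
Qed.

(* Speed and fast time of the successive returns to the wall hit first, i.e. of the odd
   events, starting from the first hit at time [t0] with speed [v0]. *)
Fixpoint return_speed (a b : R -> R) (eps v0 : R) (n : nat) : R :=
  match n with
  | O => v0
  | S n => damp a eps (damp b eps (return_speed a b eps v0 n))
  end.

Fixpoint return_time (Ln : R) (a b : R -> R) (eps t0 v0 : R) (n : nat) : R :=
  match n with
  | O => t0
  | S n => return_time Ln a b eps t0 v0 n + Ln / return_speed a b eps v0 n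
           + Ln / damp b eps (return_speed a b eps v0 n)
  end.

Section EulerTracking.

Variables (a b u : R -> R) (Ln vlo vhi r L C T : R).
Hypotheses (HLn : 0 < Ln) (Hvlo : 0 < vlo) (Hr : 0 < r) (HL : 0 <= L) (HT : 0 <= T).
Hypotheses (Ha_lip : lipschitz_on a vlo vhi L) (Hb_lip : lipschitz_on b vlo vhi L).
Hypotheses (Ha_bd : pos_bounded_on a vlo vhi C) (Hb_bd : pos_bounded_on b vlo vhi C).
Hypothesis Hu_ode : forall t, 0 <= t <= T -> is_derive u t (drift a b Ln (u t)).
Hypothesis Hu_range : forall t, 0 <= t <= T -> vlo + r <= u t <= vhi - r.

(* Lipschitz constant and bound of the drift on the window, and the local error of one
   round trip per unit of slow time. *)
Let K := (L * vhi ^ 2 + 2 * C * vhi) / Ln.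
Let M := C * vhi ^ 2 / Ln.
Let C1 := (L * C * vhi ^ 2 + 3 * C ^ 2 * vhi) * vhi / Ln + 2 * K * M * Ln / vlo.

Let vlo_lt_vhi : vlo < vhi.
Proof. pose proof (Hu_range 0 (conj (Rle_refl 0) HT)). lra. Qed.

Let C_nonneg : 0 <= C.
Proof. pose proof (Ha_bd vlo (conj (Rle_refl vlo) (Rlt_le _ _ vlo_lt_vhi))). lra. Qed.

Let K_nonneg : 0 <= K.
Proof.
  apply Rdiv_le_0_compat; [|exact HLn].
  pose proof (pow2_ge_0 vhi). apply Rplus_le_le_0_compat; repeat apply Rmult_le_pos; lra.
Qed.

Let M_nonneg : 0 <= M.
Proof. apply Rdiv_le_0_compat; [apply Rmult_le_pos; [lra | apply pow2_ge_0] | exact HLn]. Qed.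

Let C1_nonneg : 0 <= C1.
Proof.
  assert (0 <= vhi ^ 2) by apply pow2_ge_0. assert (0 <= C ^ 2) by apply pow2_ge_0.
  assert (0 <= L * C * vhi ^ 2) by (apply Rmult_le_pos; [apply Rmult_le_pos|]; lra).
  assert (0 <= 3 * C ^ 2 * vhi) by (apply Rmult_le_pos; [apply Rmult_le_pos|]; lra).
  assert (0 <= 2 * K * M * Ln)
    by (apply Rmult_le_pos; [apply Rmult_le_pos; [apply Rmult_le_pos|] |]; lra).
  apply Rplus_le_le_0_compat; apply Rdiv_le_0_compat; try lra.
  apply Rmult_le_pos; lra.
Qed.

Let drift_u_bounded t : 0 <= t <= T -> Rabs (drift a b Ln (u t)) <= M.
Proof.
  intros ht. pose proof (Hu_range t ht).
  apply (drift_bounded a b Ln vlo vhi C); auto; lra.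
Qed.

Lemma ode_solution_lipschitz : lipschitz_on u 0 T M.
Proof. exact (derive_bound_lipschitz u _ 0 T M Hu_ode drift_u_bounded). Qed.

Let local_errors_absorbed eps D :
  0 < eps -> eps * Ln / vhi <= D <= 2 * (eps * Ln / vlo) ->
  eps ^ 2 * (L * C * vhi ^ 2 + 3 * C ^ 2 * vhi) + K * M * D ^ 2 <= C1 * eps * D.
Proof.
  intros heps [hDlo hDhi].
  set (E := L * C * vhi ^ 2 + 3 * C ^ 2 * vhi).
  assert (hE : 0 <= E).
  { pose proof (pow2_ge_0 vhi). pose proof (pow2_ge_0 C).
    apply Rplus_le_le_0_compat; repeat apply Rmult_le_pos; lra. }
  assert (hD0 : 0 <= D).
  { assert (0 <= eps * Ln / vhi) by (apply Rdiv_le_0_compat; [apply Rmult_le_pos|]; lra). lra. }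
  assert (heps_D : eps <= vhi / Ln * D).
  { apply (Rmult_le_reg_l (Ln / vhi)); [apply Rdiv_lt_0_compat; lra|].
    replace (Ln / vhi * (vhi / Ln * D)) with D by (field; lra).
    replace (Ln / vhi * eps) with (eps * Ln / vhi) by (field; lra). exact hDlo. }
  assert (h1 : eps ^ 2 * E <= eps * (E * vhi / Ln) * D).
  { replace (eps * (E * vhi / Ln) * D) with (eps * E * (vhi / Ln * D)) by (field; lra).
    replace (eps ^ 2 * E) with (eps * E * eps) by ring.
    apply Rmult_le_compat_l; [apply Rmult_le_pos|]; lra. }
  assert (h2 : K * M * D ^ 2 <= eps * (2 * K * M * Ln / vlo) * D).
  { replace (K * M * D ^ 2) with (K * M * D * D) by ring.
    apply Rmult_le_compat_r; [exact hD0|].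
    replace (eps * (2 * K * M * Ln / vlo)) with (K * M * (2 * (eps * Ln / vlo))) by (field; lra).
    apply Rmult_le_compat_l; [apply Rmult_le_pos|]; lra. }
  replace (C1 * eps * D) with (eps * (E * vhi / Ln) * D + eps * (2 * K * M * Ln / vlo) * D)
    by (unfold C1, E; field; lra).
  lra.
Qed.

Lemma tracking_step eps v s D :
  0 < eps -> eps * C <= 1 / 2 -> eps * C * vhi <= r / 2 ->
  vlo + r / 2 <= v <= vhi -> 0 <= s -> s + D <= T ->
  D = eps * Ln * (1 / v + 1 / damp b eps v) ->
  Rabs (damp a eps (damp b eps v) - u (s + D)) <= Rabs (v - u s) * (1 + K * D) + C1 * eps * D.
Proof.
  intros heps heC heCv hv hs hT hD.
  destruct (damp_range b vlo vhi C eps v Hb_bd ltac:(lra) ltac:(lra) ltac:(lra) ltac:(lra))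
    as [[hv'lo hv'v] _].
  destruct (round_trip_duration_bounds eps Ln vlo vhi v (damp b eps v)) as [hDlo hDhi];
    try lra.
  rewrite <- hD in hDlo, hDhi.
  pose proof (local_errors_absorbed eps D heps (conj hDlo hDhi)).
  assert (hD0 : 0 <= D).
  { assert (0 <= eps * Ln / vhi) by (apply Rdiv_le_0_compat; [apply Rmult_le_pos|]; lra). lra. }
  set (G := drift a b Ln).
  assert (hGlip : lipschitz_on G vlo vhi K)
    by (apply (drift_lipschitz a b Ln vlo vhi L C); assumption).
  assert (E1 : Rabs (damp a eps (damp b eps v) - v - G v * D)
               <= eps ^ 2 * (L * C * vhi ^ 2 + 3 * C ^ 2 * vhi))
    by (rewrite hD; apply (round_trip_euler_error a b Ln vlo vhi L C); auto; lra).
  assert (E2 : Rabs (u (s + D) - u s - G (u s) * D) <= K * M * D ^ 2).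
  { apply (euler_step_error u G T); auto.
    intros t1 t2 h1 h2. pose proof (Hu_range t1 h1). pose proof (Hu_range t2 h2).
    apply hGlip; lra. }
  assert (E3 : Rabs ((G v - G (u s)) * D) <= K * Rabs (v - u s) * D).
  { pose proof (Hu_range s ltac:(lra)).
    rewrite Rabs_mult, (Rabs_right D) by lra.
    apply Rmult_le_compat_r; [lra|]. apply hGlip; lra. }
  replace (damp a eps (damp b eps v) - u (s + D))
    with ((damp a eps (damp b eps v) - v - G v * D) + (v - u s) + (G v - G (u s)) * D
          - (u (s + D) - u s - G (u s) * D)) by ring.
  eapply Rle_trans; [apply Rabs_triang|]. rewrite Rabs_Ropp.
  eapply Rle_trans; [apply Rplus_le_compat_r, Rabs_triang|].
  eapply Rle_trans; [apply Rplus_le_compat_r, Rplus_le_compat_r, Rabs_triang|].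
  lra.
Qed.

Section EulerScheme.

Variables (E0 eps t0 v0 : R).

Let Z := (E0 + C1 * T) * exp (K * T).
Let V := return_speed a b eps v0.
Let S m := eps * return_time Ln a b eps t0 v0 m.
Let g x := (eps * E0 + C1 * eps * x) * exp (K * x).

Hypotheses (HE0 : 0 <= E0) (Heps : 0 < eps) (HeC : eps * C <= 1 / 2).
Hypotheses (HeCv : eps * C * vhi <= r / 2) (HeZ : eps * Z <= r / 2) (Ht0 : 0 <= eps * t0).
Hypothesis Hv0 : eps * t0 <= T -> Rabs (v0 - u (eps * t0)) <= eps * E0.

Let g_le x : 0 <= x <= T -> g x <= eps * Z.
Proof.
  intros hx. unfold g, Z.
  replace (eps * ((E0 + C1 * T) * exp (K * T))) with ((eps * E0 + C1 * eps * T) * exp (K * T))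
    by ring.
  apply gronwall_bound_le; [apply Rmult_le_pos | apply Rmult_le_pos | exact K_nonneg | exact hx];
    lra.
Qed.

Let tracking_invariant m :=
  vlo + r / 2 <= V m <= v0 /\ S O <= S m /\ Rabs (V m - u (S m)) <= g (S m - S O).

Let start_range : S O <= T -> vlo + r / 2 <= v0 <= vhi - r / 2.
Proof.
  intros hS0T. pose proof (Hu_range (eps * t0) (conj Ht0 hS0T)).
  assert (eps * E0 <= eps * Z).
  { apply Rmult_le_compat_l; [lra|]. pose proof (g_le 0 ltac:(lra)) as h.
    unfold g in h. rewrite Rmult_0_r, Rplus_0_r, Rmult_0_r, exp_0, Rmult_1_r in h.
    apply (Rmult_le_reg_l eps); lra. }
  specialize (Hv0 hS0T). apply Rabs_le_between' in Hv0. lra.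
Qed.

Let tracking_invariant_start : S O <= T -> tracking_invariant O.
Proof.
  intros hS0T. unfold tracking_invariant, g.
  rewrite Rminus_diag, Rmult_0_r, Rmult_0_r, Rplus_0_r, exp_0, Rmult_1_r.
  pose proof (start_range hS0T). split; [cbn; lra|]. split; [lra | exact (Hv0 hS0T)].
Qed.

Let tracking_invariant_succ m :
  S O <= T -> S (Datatypes.S m) <= T -> tracking_invariant m -> tracking_invariant (Datatypes.S m).
Proof.
  intros hS0T hSSm [hVm [hSm herr]].
  pose proof (start_range hS0T).
  set (v := V m) in *.
  assert (hv : vlo + r / 2 <= v <= vhi) by lra.
  destruct (damp_range b vlo vhi C eps v Hb_bd ltac:(lra) ltac:(lra) ltac:(lra) ltac:(lra))
    as [[hv'lo hv'v] _].
  set (D := S (Datatypes.S m) - S m).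
  assert (hD : D = eps * Ln * (1 / v + 1 / damp b eps v)).
  { unfold D, S. cbn [return_time]. fold V v. field. lra. }
  assert (hD0 : 0 <= D).
  { rewrite hD. apply Rmult_le_pos; [apply Rmult_le_pos; lra|].
    apply Rplus_le_le_0_compat; apply Rlt_le, Rdiv_lt_0_compat; lra. }
  assert (hS0 : S O = eps * t0) by reflexivity.
  pose proof (tracking_step eps v (S m) D Heps HeC HeCv hv ltac:(lra) ltac:(unfold D; lra) hD)
    as hstep.
  replace (S m + D) with (S (Datatypes.S m)) in hstep by (unfold D; ring).
  pose proof (gronwall_step (eps * E0) (C1 * eps) K (S m - S O) D _ _ K_nonneg
    ltac:(lra) hD0 ltac:(apply Rmult_le_pos; lra) ltac:(apply Rmult_le_pos; lra)
    herr hstep) as herr'.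
  replace (S m - S O + D) with (S (Datatypes.S m) - S O) in herr' by (unfold D; ring).
  fold (g (S (Datatypes.S m) - S O)) in herr'.
  assert (hVeq : V (Datatypes.S m) = damp a eps (damp b eps v)) by reflexivity.
  assert (hVS : V (Datatypes.S m) <= damp b eps v).
  { rewrite hVeq. apply damp_le; [lra | | lra]. pose proof (Ha_bd (damp b eps v) ltac:(lra)). lra. }
  split; [|split; [unfold D in hD0; lra | exact herr']].
  pose proof (g_le (S (Datatypes.S m) - S O) ltac:(unfold D in hD0; lra)).
  pose proof (Hu_range (S (Datatypes.S m)) ltac:(unfold D in hD0; lra)).
  apply Rabs_le_between' in herr'. lra.
Qed.

Lemma return_speed_tracks n : (forall i, (i <= n)%nat -> S i <= T) ->
  vlo + r / 2 <= V n <= v0 /\ Rabs (V n - u (S n)) <= eps * Z.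
Proof.
  intros hn. assert (hS0T : S O <= T) by (apply hn; lia).
  assert (inv : forall m, (m <= n)%nat -> tracking_invariant m).
  { induction m as [|m IH]; intros hm; [exact (tracking_invariant_start hS0T)|].
    apply tracking_invariant_succ; [exact hS0T | apply hn; lia | apply IH; lia]. }
  destruct (inv n (le_n n)) as [hVn [hSn herr]].
  assert (S n <= T) by (apply hn; lia).
  split; [exact hVn|]. eapply Rle_trans; [exact herr|]. apply g_le.
  assert (S O = eps * t0) by reflexivity. lra.
Qed.

End EulerScheme.

Lemma return_speed_tracks_ode E0 :
  0 <= E0 ->
  exists Z, 0 <= Z /\
  forall eps t0 v0,
  0 < eps -> eps * C <= 1 / 2 -> eps * C * vhi <= r / 2 -> eps * Z <= r / 2 ->
  0 <= eps * t0 -> (eps * t0 <= T -> Rabs (v0 - u (eps * t0)) <= eps * E0) ->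
  forall n, (forall i, (i <= n)%nat -> eps * return_time Ln a b eps t0 v0 i <= T) ->
  vlo + r / 2 <= return_speed a b eps v0 n <= v0 /\
  Rabs (return_speed a b eps v0 n - u (eps * return_time Ln a b eps t0 v0 n)) <= eps * Z.
Proof.
  intros hE0. exists ((E0 + C1 * T) * exp (K * T)). split.
  - apply Rmult_le_pos; [apply Rplus_le_le_0_compat, Rmult_le_pos | apply Rlt_le, exp_pos]; lra.
  - intros eps t0 v0 heps heC heCv heZ ht0 hv0. exact (return_speed_tracks E0 eps t0 v0
      hE0 heps heC heCv heZ ht0 hv0).
Qed.

End EulerTracking.

Definition heads_right (p : R) : bool := if Rlt_dec 0 p then true else false.

Lemma toward_heads_right p : p <> 0 -> toward (heads_right p) (Rabs p) = p.
Proof.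
  intros hp. unfold heads_right, toward.
  destruct (Rlt_dec 0 p); [apply Rabs_right | rewrite Rabs_left, Ropp_involutive]; lra.
Qed.

Lemma first_exceedance (f : nat -> R) x :
  f O <= x -> (exists n, x < f n) ->
  exists k, (forall i, (i <= k)%nat -> f i <= x) /\ x < f (S k).
Proof.
  intros h0 [N hN].
  assert (hcase : forall n, (forall i, (i <= n)%nat -> f i <= x) \/
                   exists k, (forall i, (i <= k)%nat -> f i <= x) /\ x < f (S k)).
  { induction n as [|n [hall|hex]]; [| |now right].
    { left. intros i hi. replace i with O by lia. exact h0. }
    destruct (Rle_lt_dec (f (S n)) x) as [hle|hlt]; [left|right; exists n; auto].
    intros i hi. destruct (Nat.eq_dec i (S n)) as [->|]; [exact hle | apply hall; lia]. }
  destruct (hcase N) as [hall|hex]; [|exact hex].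
  specialize (hall N (le_n N)). lra.
Qed.

Section EdgeTracking.

Variables (a1 a2 hO : R) (c1 c2 c3 : R -> R) (e : edge) (q0 p0 T : R).
Variables (u : R -> R) (vlo vhi r L C : R).

Let right := heads_right p0.
Let a := wall_coef c1 c2 c3 e right.
Let b := wall_coef c1 c2 c3 e (negb right).
Let Ln := edge_length a1 a2 e.

Hypotheses (Ha1 : 0 < a1) (Ha2 : 0 < a2) (Hq0 : -a1 <= q0 <= a2).
Hypotheses (Hwell : in_well e q0 p0) (Hp0 : p0 <> 0) (HT : 0 <= T).
Hypotheses (Hvlo : 0 < vlo) (Hr : 0 < r) (HL : 0 <= L).
Hypotheses (Ha_lip : lipschitz_on a vlo vhi L) (Hb_lip : lipschitz_on b vlo vhi L).
Hypotheses (Ha_bd : pos_bounded_on a vlo vhi C) (Hb_bd : pos_bounded_on b vlo vhi C).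
Hypothesis Hu_ode : forall t, 0 <= t <= T -> is_derive u t (drift a b Ln (u t)).
Hypothesis Hu_range : forall t, 0 <= t <= T -> vlo + r <= u t <= vhi - r.
Hypothesis Hu0 : u 0 = Rabs p0.
Hypothesis Hregime : forall v, vlo <= v <= Rabs p0 -> in_regime hO e v.

Let Ln_pos : 0 < Ln.
Proof. unfold Ln, edge_length. destruct e; cbn; lra. Qed.

Let p0_range : vlo + r <= Rabs p0 <= vhi - r.
Proof. rewrite <- Hu0. apply Hu_range. lra. Qed.

Let C_nonneg : 0 <= C.
Proof. pose proof (Ha_bd vlo ltac:(lra)). lra. Qed.

Lemma first_wall_time :
  0 <= (wall a1 a2 e right - q0) / p0 <= Ln / Rabs p0.
Proof.
  assert (hwalls : wall a1 a2 e false <= q0 <= wall a1 a2 e true)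
    by (destruct e; cbn in *; lra).
  unfold right, heads_right, Ln, edge_length. destruct (Rlt_dec 0 p0) as [hp|hp].
  - rewrite Rabs_right by lra. split; [apply Rdiv_le_0_compat; lra|].
    unfold Rdiv. apply Rmult_le_compat_r; [apply Rlt_le, Rinv_0_lt_compat|]; lra.
  - rewrite Rabs_left by lra.
    replace ((wall a1 a2 e false - q0) / p0) with ((q0 - wall a1 a2 e false) / - p0)
      by (field; lra).
    split; [apply Rdiv_le_0_compat; lra|].
    unfold Rdiv. apply Rmult_le_compat_r; [apply Rlt_le, Rinv_0_lt_compat|]; lra.
Qed.

Section FixedEpsilon.

Variables (eps M Z : R).
Hypotheses (Heps : 0 < eps) (HeCv : eps * C * vhi <= r / 2) (HM : 0 <= M) (HZ : 0 <= Z).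
Hypothesis Hu_lip : lipschitz_on u 0 T M.

Let t1 := (wall a1 a2 e right - q0) / p0.
Let v1 := damp a eps (Rabs p0).
Let V := return_speed a b eps v1.
Let S n := eps * return_time Ln a b eps t1 v1 n.
Let ev := event a1 a2 hO c1 c2 c3 eps (q0, p0).

Hypothesis Htrack : forall n, (forall i, (i <= n)%nat -> S i <= T) ->
  vlo + r / 2 <= V n <= v1 /\ Rabs (V n - u (S n)) <= eps * Z.

Let v1_le : v1 <= Rabs p0.
Proof.
  apply damp_le; [lra | | apply Rabs_pos]. pose proof (Ha_bd (Rabs p0) ltac:(lra)). lra.
Qed.

Lemma first_return_time_range : 0 <= S O <= eps * Ln / vlo.
Proof.
  pose proof first_wall_time as [ht1 ht1']. fold t1 in ht1, ht1'.
  change (S O) with (eps * t1). split; [apply Rmult_le_pos; lra|].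
  replace (eps * Ln / vlo) with (eps * (Ln / vlo)) by (field; lra).
  apply Rmult_le_compat_l; [lra|]. eapply Rle_trans; [exact ht1'|].
  apply Rmult_le_compat_l; [lra|]. apply Rinv_le_contravar; lra.
Qed.

Lemma initial_return_error : S O <= T -> Rabs (v1 - u (S O)) <= eps * (C * vhi + M * Ln / vlo).
Proof.
  intros hS0T. destruct first_return_time_range as [hS0pos hS0le].
  destruct (damp_range a vlo vhi C eps (Rabs p0) Ha_bd ltac:(lra) ltac:(lra) ltac:(lra) ltac:(lra))
    as [[hv1lo _] hloss]; fold v1 in hv1lo, hloss.
  replace (v1 - u (S O)) with ((v1 - Rabs p0) + (u 0 - u (S O))) by (rewrite Hu0; ring).
  eapply Rle_trans; [apply Rabs_triang|].
  rewrite Rabs_left1 by lra.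
  assert (Rabs (u 0 - u (S O)) <= M * (eps * Ln / vlo)).
  { eapply Rle_trans; [apply Hu_lip; lra|].
    apply Rmult_le_compat_l; [lra|]. rewrite Rabs_left1; lra. }
  replace (eps * (C * vhi + M * Ln / vlo)) with (eps * C * vhi + M * (eps * Ln / vlo))
    by (field; lra).
  lra.
Qed.

Lemma first_event : ev 1 = (t1, wall a1 a2 e right, toward (negb right) v1).
Proof.
  unfold ev; cbn [event fst snd].
  rewrite <- (toward_heads_right p0 Hp0) at 1. fold right.
  rewrite (step_toward_wall a1 a2 hO c1 c2 c3 eps e).
  - unfold right. rewrite toward_heads_right, Rplus_0_l by exact Hp0. reflexivity.
  - lra.
  - apply Hregime. lra.
  - unfold right. rewrite toward_heads_right by exact Hp0. exact Hwell.
Qed.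

Lemma return_admissible n : (forall i, (i <= n)%nat -> S i <= T) ->
  (vlo <= V n <= Rabs p0) /\ (vlo <= damp b eps (V n) <= V n) /\
  V n - damp b eps (V n) <= eps * C * vhi.
Proof.
  intros hn. destruct (Htrack n hn) as [hVn _].
  destruct (damp_range b vlo vhi C eps (V n) Hb_bd ltac:(lra) ltac:(lra) ltac:(lra) ltac:(lra))
    as [hdamp hloss].
  split; [lra | auto].
Qed.

Lemma return_events n : (forall i, (i <= n)%nat -> S i <= T) ->
  ev (2 * n + 1) =
    (return_time Ln a b eps t1 v1 n, wall a1 a2 e right, toward (negb right) (V n)) /\
  ev (Datatypes.S (2 * n + 1)) = (return_time Ln a b eps t1 v1 n + Ln / V n,
                                  wall a1 a2 e (negb right), toward right (damp b eps (V n))) /\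
  ev (Datatypes.S (Datatypes.S (2 * n + 1))) =
    (return_time Ln a b eps t1 v1 (Datatypes.S n), wall a1 a2 e right,
     toward (negb right) (V (Datatypes.S n))).
Proof.
  induction n as [|n IH]; intros hn.
  - destruct (return_admissible O hn) as [hV [hV' _]].
    change (V O) with v1 in hV, hV' |- *.
    change (return_time Ln a b eps t1 v1 O) with t1.
    change (2 * 0 + 1)%nat with 1%nat.
    destruct (step_round_trip a1 a2 hO c1 c2 c3 eps Ha1 Ha2 e right t1 v1)
      as [h1 h2]; fold b; [lra | apply Hregime; lra | lra | apply Hregime; lra |].
    change (ev 3) with (step a1 a2 hO c1 c2 c3 eps (step a1 a2 hO c1 c2 c3 eps (ev 1))).
    change (ev 2) with (step a1 a2 hO c1 c2 c3 eps (ev 1)).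
    rewrite first_event. split; [reflexivity|]. split; [exact h1 | exact h2].
  - destruct IH as [_ [_ hodd]]; [intros i hi; apply hn; lia|].
    replace (2 * Datatypes.S n + 1)%nat with (Datatypes.S (Datatypes.S (2 * n + 1))) by lia.
    destruct (return_admissible (Datatypes.S n) hn) as [hV [hV' _]].
    destruct (step_round_trip a1 a2 hO c1 c2 c3 eps Ha1 Ha2 e right
                (return_time Ln a b eps t1 v1 (Datatypes.S n)) (V (Datatypes.S n)))
      as [h1 h2]; fold b; [lra | apply Hregime; lra | lra | apply Hregime; lra |].
    change (ev (Datatypes.S (Datatypes.S (Datatypes.S (Datatypes.S (2 * n + 1))))))
      with (step a1 a2 hO c1 c2 c3 eps (step a1 a2 hO c1 c2 c3 eps
              (ev (Datatypes.S (Datatypes.S (2 * n + 1)))))).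
    change (ev (Datatypes.S (Datatypes.S (Datatypes.S (2 * n + 1)))))
      with (step a1 a2 hO c1 c2 c3 eps (ev (Datatypes.S (Datatypes.S (2 * n + 1))))).
    rewrite hodd. split; [reflexivity|]. split; [exact h1 | exact h2].
Qed.

Lemma return_time_nonneg n : (forall i, (i <= n)%nat -> S i <= T) -> 0 <= S n.
Proof.
  intros hn. destruct (return_events n hn) as [hodd _].
  pose proof (event_time_le a1 a2 hO c1 c2 c3 eps Ha1 Ha2 (q0, p0) Hq0 O (2 * n + 1) ltac:(lia))
    as hle.
  fold ev in hle. rewrite hodd in hle. cbn in hle. apply Rmult_le_pos; lra.
Qed.

Lemma return_time_succ n :
  S (Datatypes.S n) = S n + eps * Ln * (1 / V n + 1 / damp b eps (V n)).
Proof. unfold S; cbn [return_time]. fold V. unfold Rdiv. ring. Qed.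

Lemma returns_unbounded t : t <= T -> exists n, t < S n.
Proof.
  intros ht. set (delta := eps * Ln / vhi).
  assert (hdelta : 0 < delta) by (apply Rdiv_lt_0_compat; [apply Rmult_lt_0_compat|]; lra).
  destruct (Rle_lt_dec (S O) t) as [h0|h0]; [|exists O; exact h0].
  assert (hS0 : 0 <= S O)
    by (apply return_time_nonneg; intros i hi; replace i with O by lia; lra).
  assert (hgrow : forall n, (exists i, t < S i) \/
            (S O + INR n * delta <= S n /\ forall i, (i <= n)%nat -> S i <= t)).
  { induction n as [|n [hex | [hbound hall]]]; [| left; exact hex |].
    - right. split; [cbn; lra | intros i hi; replace i with O by lia; exact h0].
    - destruct (Rle_lt_dec (S (Datatypes.S n)) t) as [hle|hlt]; [right | left; eauto].
      assert (hadm : forall i, (i <= n)%nat -> S i <= T)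
        by (intros i hi; specialize (hall i hi); lra).
      destruct (return_admissible n hadm) as [hV [hV' _]].
      destruct (round_trip_duration_bounds eps Ln vlo vhi (V n) (damp b eps (V n)))
        as [hgap _]; try lra.
      fold delta in hgap. split; [rewrite return_time_succ, S_INR; lra|].
      intros i hi.
      destruct (Nat.eq_dec i (Datatypes.S n)) as [->|]; [exact hle | apply hall; lia]. }
  destruct (INR_archimed delta T hdelta) as [N hN].
  destruct (hgrow N) as [hex | [hbound hall]]; [exact hex|].
  specialize (hall N (le_n N)). lra.
Qed.

Let speed_error := C * vhi + Z + 2 * M * Ln / vlo.

Lemma initial_speed_near t : 0 <= t < S O -> t <= T -> Rabs (Rabs p0 - u t) <= eps * speed_error.
Proof.
  intros ht htT. destruct first_return_time_range as [hS0pos hS0le].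
  rewrite <- Hu0. eapply Rle_trans; [apply Hu_lip; lra|].
  rewrite Rminus_0_l, Rabs_Ropp, Rabs_right by lra.
  assert (M * t <= M * (eps * Ln / vlo)) by (apply Rmult_le_compat_l; lra).
  assert (0 <= eps * C * vhi) by (apply Rmult_le_pos; [apply Rmult_le_pos|]; lra).
  assert (0 <= eps * Z) by (apply Rmult_le_pos; lra).
  assert (0 <= M * (eps * Ln / vlo))
    by (apply Rmult_le_pos; [|apply Rdiv_le_0_compat; [apply Rmult_le_pos|]]; lra).
  unfold speed_error. replace (eps * (C * vhi + Z + 2 * M * Ln / vlo))
    with (eps * C * vhi + eps * Z + 2 * (M * (eps * Ln / vlo))) by (field; lra).
  lra.
Qed.

Lemma return_speed_near k t w :
  (forall i, (i <= k)%nat -> S i <= t) -> t < S (Datatypes.S k) -> t <= T ->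
  Rabs (w - V k) <= eps * C * vhi -> Rabs (w - u t) <= eps * speed_error.
Proof.
  intros hk hlt ht hw.
  assert (hadm : forall i, (i <= k)%nat -> S i <= T) by (intros i hi; specialize (hk i hi); lra).
  destruct (return_admissible k hadm) as [hV [hV' _]].
  destruct (Htrack k hadm) as [_ htrack].
  pose proof (return_time_nonneg k hadm) as hSk0.
  specialize (hk k (le_n k)).
  destruct (round_trip_duration_bounds eps Ln vlo vhi (V k) (damp b eps (V k)))
    as [_ hgap]; try lra.
  rewrite return_time_succ in hlt.
  assert (hu : Rabs (u (S k) - u t) <= M * (2 * (eps * Ln / vlo))).
  { eapply Rle_trans; [apply Hu_lip; lra|]. apply Rmult_le_compat_l; [lra|].
    rewrite Rabs_left1; lra. }
  replace (w - u t) with ((w - V k) + (V k - u (S k)) + (u (S k) - u t)) by ring.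
  eapply Rle_trans; [apply Rabs_triang|].
  eapply Rle_trans; [apply Rplus_le_compat_r, Rabs_triang|].
  unfold speed_error. replace (eps * (C * vhi + Z + 2 * M * Ln / vlo))
    with (eps * C * vhi + eps * Z + M * (2 * (eps * Ln / vlo))) by (field; lra).
  lra.
Qed.

Lemma energy_near_of_speed_near t k w :
  0 <= t <= T -> ev_time (ev k) <= t / eps < ev_time (ev (Datatypes.S k)) ->
  snd (ev k) ^ 2 = w ^ 2 -> 0 <= w <= vhi -> Rabs (w - u t) <= eps * speed_error ->
  Rabs (energy (traj a1 a2 hO c1 c2 c3 eps (q0, p0) (t / eps)) - u t ^ 2 / 2)
  <= eps * (vhi * speed_error).
Proof.
  intros ht hk hsq hw hwu. pose proof (Hu_range t ht).
  rewrite (traj_energy_between_events a1 a2 hO c1 c2 c3 eps Ha1 Ha2 (q0, p0) Hq0 _ k hk).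
  fold ev. rewrite hsq. eapply Rle_trans; [apply half_sq_lipschitz; [exact hw | lra]|].
  replace (eps * (vhi * speed_error)) with (vhi * (eps * speed_error)) by ring.
  apply Rmult_le_compat_l; lra.
Qed.

Lemma energy_at t : 0 <= t <= T ->
  Rabs (energy (traj a1 a2 hO c1 c2 c3 eps (q0, p0) (t / eps)) - u t ^ 2 / 2)
  <= eps * (vhi * speed_error).
Proof.
  intros ht.
  assert (hs : eps * (t / eps) = t) by (field; lra).
  assert (hle : forall x, eps * x <= t -> x <= t / eps)
    by (intros x hx; apply (Rmult_le_reg_l eps); lra).
  assert (hlt : forall x, t < eps * x -> t / eps < x)
    by (intros x hx; apply (Rmult_lt_reg_l eps); lra).
  destruct (Rlt_le_dec t (S O)) as [hfirst | hlater].
  - apply (energy_near_of_speed_near t O (Rabs p0)); [exact ht | | | lra |].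
    + change (ev_time (ev O)) with 0. rewrite first_event. unfold ev_time; cbn [fst].
      split; [apply hle; lra | apply hlt, hfirst].
    + change (snd (ev O)) with p0. symmetry. apply pow2_abs.
    + apply initial_speed_near; lra.
  - destruct (first_exceedance S t hlater (returns_unbounded t (proj2 ht))) as [k [hk hnext]].
    assert (hadm : forall i, (i <= k)%nat -> S i <= T) by (intros i hi; specialize (hk i hi); lra).
    destruct (return_admissible k hadm) as [hV [hV' hloss]].
    destruct (return_events k hadm) as [hodd [heven hthird]].
    assert (hSk : S k <= t) by (apply hk; lia).
    destruct (Rlt_le_dec (t / eps) (return_time Ln a b eps t1 v1 k + Ln / V k)) as [hout | hback].
    + apply (energy_near_of_speed_near t (2 * k + 1) (V k)); [exact ht | | | lra |].
      * rewrite hodd, heven. unfold ev_time; cbn [fst]. split; [apply hle, hSk | exact hout].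
      * rewrite hodd. apply toward_sq.
      * apply (return_speed_near k); [exact hk | lra | lra |].
        rewrite Rminus_diag, Rabs_R0. apply Rmult_le_pos; [apply Rmult_le_pos|]; lra.
    + apply (energy_near_of_speed_near t (Datatypes.S (2 * k + 1)) (damp b eps (V k)));
        [exact ht | | | lra |].
      * rewrite heven, hthird. unfold ev_time; cbn [fst]. split; [exact hback | apply hlt, hnext].
      * rewrite heven. apply toward_sq.
      * apply (return_speed_near k); [exact hk | lra | lra |]. rewrite Rabs_left1; lra.
Qed.

End FixedEpsilon.

Lemma energy_error_linear :
  exists eps1 Q, 0 < eps1 /\ 0 <= Q /\
  forall eps, 0 < eps < eps1 -> forall t, 0 <= t <= T ->
  Rabs (energy (traj a1 a2 hO c1 c2 c3 eps (q0, p0) (t / eps)) - u t ^ 2 / 2) <= eps * Q.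
Proof.
  set (M := C * vhi ^ 2 / Ln).
  assert (HM : 0 <= M)
    by (apply Rdiv_le_0_compat; [apply Rmult_le_pos; [lra | apply pow2_ge_0] | lra]).
  pose proof (ode_solution_lipschitz a b u Ln vlo vhi r C T Ln_pos Hvlo Hr Ha_bd Hb_bd
                Hu_ode Hu_range) as hulip.
  fold M in hulip.
  assert (hE0 : 0 <= C * vhi + M * Ln / vlo).
  { assert (0 <= M * Ln / vlo) by (apply Rdiv_le_0_compat; [apply Rmult_le_pos|]; lra).
    assert (0 <= C * vhi) by (apply Rmult_le_pos; lra). lra. }
  destruct (return_speed_tracks_ode a b u Ln vlo vhi r L C T Ln_pos Hvlo Hr HL HT
              Ha_lip Hb_lip Ha_bd Hb_bd Hu_ode Hu_range _ hE0) as [Z [hZ htrack]].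
  exists (Rmin (1 / 2 / (C + 1)) (Rmin (r / 2 / (C * vhi + 1)) (r / 2 / (Z + 1)))),
    (vhi * (C * vhi + Z + 2 * M * Ln / vlo)).
  assert (0 <= C * vhi) by (apply Rmult_le_pos; lra).
  split; [repeat apply Rmin_pos; apply Rdiv_lt_0_compat; lra|].
  split.
  { assert (0 <= 2 * M * Ln / vlo)
      by (apply Rdiv_le_0_compat; [apply Rmult_le_pos; [apply Rmult_le_pos|]|]; lra).
    apply Rmult_le_pos; lra. }
  intros eps [heps heps1] t ht.
  assert (heC : eps * C <= 1 / 2).
  { apply Rlt_le, mul_lt_of_lt_div_succ; [lra | lra |].
    eapply Rlt_le_trans; [exact heps1 | apply Rmin_l]. }
  assert (heCv : eps * C * vhi <= r / 2).
  { rewrite Rmult_assoc. apply Rlt_le, mul_lt_of_lt_div_succ; [lra | apply Rmult_le_pos; lra |].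
    eapply Rlt_le_trans; [exact heps1|]. eapply Rle_trans; [apply Rmin_r | apply Rmin_l]. }
  assert (heZ : eps * Z <= r / 2).
  { apply Rlt_le, mul_lt_of_lt_div_succ; [lra | lra |].
    eapply Rlt_le_trans; [exact heps1|]. eapply Rle_trans; [apply Rmin_r | apply Rmin_r]. }
  apply (energy_at eps M Z); auto.
  destruct (first_return_time_range eps heps) as [ht1 _].
  apply htrack; auto. exact (initial_return_error eps M heps heCv HM hulip).
Qed.

End EdgeTracking.

Lemma speed_ode a1 a2 c1 c2 c3 e right (Hs : R -> R) t :
  0 < a1 -> 0 < a2 -> 0 < Hs t -> is_derive Hs t (limit_rhs a1 a2 c1 c2 c3 e (Hs t)) ->
  is_derive (fun s => sqrt (2 * Hs s)) t
    (drift (wall_coef c1 c2 c3 e right) (wall_coef c1 c2 c3 e (negb right))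
           (edge_length a1 a2 e) (sqrt (2 * Hs t))).
Proof.
  intros ha1 ha2 hpos hd.
  pose proof (is_derive_sqrt (fun s => 2 * Hs s) t _ (is_derive_scal Hs t 2 _ hd)
                ltac:(cbn; lra)) as hsqrt.
  cbn in hsqrt.
  replace (drift _ _ _ _) with
    (2 * limit_rhs a1 a2 c1 c2 c3 e (Hs t) / (2 * sqrt (2 * Hs t))); [exact hsqrt|].
  assert (hw : 0 < sqrt (2 * Hs t)) by (apply sqrt_lt_R0; lra).
  assert (hw2 : Hs t = sqrt (2 * Hs t) * sqrt (2 * Hs t) / 2)
    by (rewrite sqrt_sqrt; lra).
  set (w := sqrt (2 * Hs t)) in *. clearbody w. rewrite hw2.
  unfold limit_rhs, drift, edge_length, T1, T2, T3.
  replace (2 * (w * w / 2)) with (w * w) by field. rewrite sqrt_square by lra.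
  destruct right, e; cbn; field; lra.
Qed.

Lemma in_edge_pos hO e h : 0 < hO -> in_edge hO e h -> 0 < h.
Proof. intros hO_pos hin. destruct e; cbn in hin; lra. Qed.

Lemma sqrt_twice_half_sq p : sqrt (2 * (p ^ 2 / 2)) = Rabs p.
Proof.
  rewrite <- pow2_abs. replace (2 * (Rabs p ^ 2 / 2)) with (Rabs p ^ 2) by field.
  apply sqrt_pow2, Rabs_pos.
Qed.

Lemma speed_window hO e (Hs : R -> R) T p0 :
  0 < hO -> 0 <= T -> Hs 0 = p0 ^ 2 / 2 ->
  (forall t, 0 <= t <= T -> continuity_pt Hs t /\ in_edge hO e (Hs t)) ->
  exists vlo vhi r, 0 < vlo /\ 0 < r /\
    (forall t, 0 <= t <= T -> vlo + r <= sqrt (2 * Hs t) <= vhi - r) /\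
    (forall v, vlo <= v <= Rabs p0 -> in_regime hO e v).
Proof.
  intros HhO HT HHs0 Hode.
  assert (Hcont : forall t, 0 <= t <= T -> continuity_pt Hs t) by (intros; apply Hode; auto).
  destruct (continuity_ab_min Hs 0 T HT Hcont) as [tmin [Hmin Htmin]].
  destruct (continuity_ab_maj Hs 0 T HT Hcont) as [tmax [Hmax Htmax]].
  set (umin := sqrt (2 * Hs tmin)). set (umax := sqrt (2 * Hs tmax)).
  (* On [I3] the speed must stay above the separatrix speed [sqrt (2 hO)]. *)
  set (floor := match e with I3 => sqrt (2 * hO) | I1 | I2 => 0 end).
  assert (hfloor : 0 <= floor < umin).
  { destruct (Hode tmin Htmin) as [_ hin]. unfold floor, umin.
    destruct e; cbn [in_edge] in hin; cbv iota; split; try lra.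
    all: first [apply sqrt_pos | apply sqrt_lt_R0; lra | apply sqrt_lt_1_alt; lra]. }
  exists ((umin + floor) / 2), (umax + (umin - floor) / 2), ((umin - floor) / 2).
  split; [lra|]. split; [lra|]. split.
  - intros t ht.
    replace ((umin + floor) / 2 + (umin - floor) / 2) with umin by field.
    replace (umax + (umin - floor) / 2 - (umin - floor) / 2) with umax by ring.
    unfold umin, umax.
    split; apply sqrt_le_1_alt; [pose proof (Hmin t ht) | pose proof (Hmax t ht)]; lra.
  - intros v hv. destruct (Hode 0 ltac:(lra)) as [_ hin0]. rewrite HHs0 in hin0.
    assert (hv0 : 0 <= v) by lra.
    assert (hsq : v ^ 2 <= p0 ^ 2) by (rewrite <- (pow2_abs p0); apply pow_incr; lra).
    destruct e; cbn [in_regime in_edge] in *; try lra.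
    assert (hroot : sqrt (2 * hO) < v)
      by (unfold floor in hfloor, hv; cbv iota in hfloor, hv; lra).
    assert (sqrt (2 * hO) * sqrt (2 * hO) < v * v)
      by (apply Rmult_le_0_lt_compat; try apply sqrt_pos; lra).
    rewrite sqrt_sqrt in H by lra. replace (v ^ 2) with (v * v) by ring. lra.
Qed.

Lemma wall_coef_lipschitz c1 c2 c3 lo hi :
  smooth_pos c1 -> smooth_pos c2 -> smooth_pos c3 -> 0 < lo -> lo <= hi ->
  exists L C, 0 <= L /\ forall e right,
    lipschitz_on (wall_coef c1 c2 c3 e right) lo hi L /\
    pos_bounded_on (wall_coef c1 c2 c3 e right) lo hi C.
Proof.
  intros h1 h2 h3 hlo hlohi.
  destruct (smooth_pos_lipschitz_on c1 lo hi h1 hlo hlohi) as [L1 [C1 [hL1 [hlip1 hbd1]]]].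
  destruct (smooth_pos_lipschitz_on c2 lo hi h2 hlo hlohi) as [L2 [C2 [hL2 [hlip2 hbd2]]]].
  destruct (smooth_pos_lipschitz_on c3 lo hi h3 hlo hlohi) as [L3 [C3 [hL3 [hlip3 hbd3]]]].
  exists (Rmax L1 (Rmax L2 L3)), (Rmax C1 (Rmax C2 C3)).
  split; [eapply Rle_trans; [exact hL1 | apply Rmax_l]|].
  pose proof (Rmax_l L1 (Rmax L2 L3)). pose proof (Rmax_r L1 (Rmax L2 L3)).
  pose proof (Rmax_l L2 L3). pose proof (Rmax_r L2 L3).
  pose proof (Rmax_l C1 (Rmax C2 C3)). pose proof (Rmax_r C1 (Rmax C2 C3)).
  pose proof (Rmax_l C2 C3). pose proof (Rmax_r C2 C3).
  intros e right. destruct e, right; cbn; split;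
    solve [ eapply lipschitz_on_le; [|eassumption]; lra
          | eapply pos_bounded_on_le; [|eassumption]; lra ].
Qed.

Theorem lemma2p1 (a1 a2 hO : R) (c1 c2 c3 : R -> R) (q0 p0 : R) (e : edge)
  (T : R) (Hs : R -> R) :
  0 < a1 -> 0 < a2 -> 0 < hO ->
  smooth_pos c1 -> smooth_pos c2 -> smooth_pos c3 ->
  - a1 <= q0 <= a2 ->
  starts_in_edge hO q0 p0 e ->
  0 <= T ->
  Hs 0 = p0 ^ 2 / 2 ->
  (forall t, 0 <= t <= T ->
     is_derive Hs t (limit_rhs a1 a2 c1 c2 c3 e (Hs t)) /\ in_edge hO e (Hs t)) ->
  forall delta, 0 < delta ->
  exists eps0, 0 < eps0 /\
    forall eps, 0 < eps < eps0 ->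
    forall t, 0 <= t <= T ->
      Rabs (energy (traj a1 a2 hO c1 c2 c3 eps (q0, p0) (t / eps)) - Hs t) < delta.
Proof.
  intros Ha1 Ha2 HhO Hc1 Hc2 Hc3 Hq0 [Hin Hwell] HT HHs0 Hode delta Hdelta.
  assert (Hpos : forall t, 0 <= t <= T -> 0 < Hs t)
    by (intros t ht; apply (in_edge_pos hO e); [exact HhO | apply Hode, ht]).
  assert (Hp0 : p0 <> 0).
  { intros ->. pose proof (in_edge_pos hO e _ HhO Hin) as h0. rewrite pow_i in h0 by lia. lra. }
  set (u := fun t => sqrt (2 * Hs t)).
  destruct (speed_window hO e Hs T p0 HhO HT HHs0)
    as [vlo [vhi [r [Hvlo [Hr [Hu_range Hregime]]]]]].
  { intros t ht. destruct (Hode t ht) as [hd hin]. split; [|exact hin].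
    apply continuity_pt_filterlim, (ex_derive_continuous Hs t). eexists; exact hd. }
  destruct (wall_coef_lipschitz c1 c2 c3 vlo vhi Hc1 Hc2 Hc3 Hvlo) as [L [C [HL Hcoef]]].
  { pose proof (Hu_range 0 ltac:(lra)). lra. }
  destruct (energy_error_linear a1 a2 hO c1 c2 c3 e q0 p0 T u vlo vhi r L C
              Ha1 Ha2 Hq0 Hwell Hp0 HT Hvlo Hr HL) as [eps1 [Q [Heps1 [HQ Herr]]]];
    try apply Hcoef; try assumption.
  - intros t ht. apply speed_ode; [exact Ha1 | exact Ha2 | apply Hpos, ht | apply Hode, ht].
  - unfold u. rewrite HHs0. apply sqrt_twice_half_sq.
  - exists (Rmin eps1 (delta / (Q + 1))).
    split; [apply Rmin_pos; [lra | apply Rdiv_lt_0_compat; lra]|].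
    intros eps [heps heps0] t ht.
    pose proof (Rmin_l eps1 (delta / (Q + 1))). pose proof (Rmin_r eps1 (delta / (Q + 1))).
    replace (Hs t) with (u t ^ 2 / 2)
      by (unfold u; rewrite pow2_sqrt; [field | pose proof (Hpos t ht); lra]).
    eapply Rle_lt_trans; [apply Herr; [lra | exact ht]|].
    apply mul_lt_of_lt_div_succ; lra.
Qed.
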